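(* Let $\mathbf{X}_-\in\mathbb{R}^{n\times T}$, $\mathbf{U}_-\in\mathbb{R}^{m\times T}$, $\mathbf{X}_+\in\mathbb{R}^{n\times T}$ be data generated by $\mathbf{X}_+=A_\ast\mathbf{X}_-+B_\ast\mathbf{U}_-+\mathbf{W}_-$ for some (unknown) $A_\ast\in\mathbb{R}^{n\times n}$, $B_\ast\in\mathbb{R}^{n\times m}$ and noise matrix $\mathbf{W}_-\in\mathbb{R}^{n\times T}$ satisfying \[ \begin{bmatrix} I\\ \mathbf{W}_-^\top\end{bmatrix}^\top\begin{bmatrix}\Phi_{11}&\Phi_{12}\\ \Phi_{12}^\top&\Phi_{22}\end{bmatrix}\begin{bmatrix} I\\ \mathbf{W}_-^\top\end{bmatrix}\succeq 0 \] for some $\Phi\in\mathbb{S}^{n+T}$ with $\Phi_{11}\succeq 0$ and $\Phi_{22}\prec 0$. Let $C\in\mathbb{R}^{q\times n}$, $D\in\mathbb{R}^{q\times m}$, $E\in\mathbb{R}^{n\times z}$, and let $\mathcal{S}\subseteq\mathbb{R}^{m\times n}$ be a subspace with representation matrix $S$. Consider the semidefinite program: minimize (infimize) $\gamma$ over $P\in\mathbb{S}^n$, $Q\in\mathbb{S}^q$, $R\in\Upsilon(S)$, $L\in\mathcal{S}$, $\alpha,\beta,\gamma\in\mathbb{R}$ subject to \[ \begin{bmatrix} P-EE^\top-\beta I & \mathbf{0} & \mathbf{0} & \mathbf{0}\\ \mathbf{0} & \mathbf{0} & \mathbf{0} & R\\ \mathbf{0} & \mathbf{0} & \mathbf{0}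 & L\\ \mathbf{0} & R^\top & L^\top & R+R^\top-P \end{bmatrix}-\alpha\begin{bmatrix}\Psi & \mathbf{0}\\ \mathbf{0} & \mathbf{0}\end{bmatrix}\succeq 0, \] \[ \begin{bmatrix} Q & CR+DL\\ (CR+DL)^\top & R+R^\top-P\end{bmatrix}\succeq 0,\qquad \operatorname{Tr}(Q)\le\gamma^2,\qquad \alpha\ge 0,\ \beta>0,\ \gamma\ge 0, \] where in the first matrix the block rows/columns have sizes $n,n,m,n$ and $\Psi\in\mathbb{S}^{2n+m}$ occupies the first three block rows/columns. If this program is feasible with optimal value $\gamma^\ast$ (attained by $(P,Q,R,L,\alpha,\beta,\gamma^\ast)$), then $K=LR^{-1}\in\mathcal{S}$ is a $\gamma^\ast$-suboptimal $H_2$ controller for every system $(A,B)\in\Sigma_{\mathcal{D}}$, i.e. for every system $x(t+1)=Ax(t)+Bu(t)+E\xi(t)$, $y(t)=Cx(t)+Du(t)$ with $(A,B)\in\Sigma_{\mathcal{D}}$.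
   Context: $\mathbb{S}^n$ denotes real symmetric $n\times n$ matrices. For a system $x(t+1)=Ax(t)+Bu(t)+E\xi(t)$, $y(t)=Cx(t)+Du(t)$ and a static feedback $u=Kx$, let $G_K(z)$ be the transfer function from $\xi$ to $y$ of the closed loop $x(t+1)=(A+BK)x(t)+E\xi(t)$, $y(t)=(C+DK)x(t)$; $K$ is a $\gamma$-suboptimal $H_2$ controller if $\|G_K(z)\|_{H_2}\le\gamma$. If $S_1,\dots,S_k\in\mathbb{R}^{m\times n}$ form a basis of $\mathcal{S}$, $S=[S_1\ \cdots\ S_k]\in\mathbb{R}^{m\times nk}$ is a representation matrix of $\mathcal{S}$, and $\Upsilon(S):=\{R\in\mathbb{R}^{n\times n}\mid\exists\Lambda\in\mathbb{S}^k:\ S(I_k\otimes R)=S(\Lambda\otimes I_n)\}$ ($\otimes$ the Kronecker product). Define \[ \Psi:=\begin{bmatrix} I & \mathbf{X}_+\\ \mathbf{0} & -\mathbf{X}_-\\ \mathbf{0} & -\mathbf{U}_-\end{bmatrix}^\top\Phi\begin{bmatrix} I & \mathbf{X}_+\\ \mathbf{0} & -\mathbf{X}_-\\ \mathbf{0} & -\mathbf{U}_-\end{bmatrix}\in\mathbb{S}^{2n+m}, \] and $\Sigma_{\mathcal{D}}:=\{(A,B)\mid [I\ \ A\ \ B]\,\Psi\,[I\ \ A\ \ B]^\top\succeq 0\}$, i.e. the set of $(A,B)\in\mathbb{R}^{n\times n}\times\mathbb{R}^{n\times m}$ with $\begin{bmatrix} I\\ A^\top\\ B^\top\end{bmatrix}^\top\Psi\begin{bmatrix}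 I\\ A^\top\\ B^\top\end{bmatrix}\succeq 0$. *)

From HB Require Import structures.
From mathcomp Require Import all_boot all_order all_algebra.
From mathcomp Require Import mxtens.
From mathcomp Require Import all_classical all_reals all_analysis.
Set Implicit Arguments.
Unset Strict Implicit.
Unset Printing Implicit Defensive.
Import Order.TTheory GRing.Theory Num.Theory.
Local Open Scope ring_scope.

Definition symmx {R : realType} {n : nat} (M : 'M[R]_n) : Prop := M^T = M.

Definition psdmx {R : realType} {n : nat} (M : 'M[R]_n) : Prop :=
  symmx M /\ forall v : 'cV[R]_n, 0 <= (v^T *m M *m v) 0 0.

Definition ndmx {R : realType} {n : nat} (M : 'M[R]_n) : Prop :=
  symmx M /\ forall v : 'cV[R]_n, v != 0 -> (v^T *m M *m v) 0 0 < 0.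

Definition linindep {R : realType} {m n k : nat} (Sb : 'I_k -> 'M[R]_(m, n)) : Prop :=
  forall c : 'I_k -> R, \sum_(i < k) c i *: Sb i = 0 -> forall i, c i = 0.

Definition spanmx {R : realType} {m n k : nat} (Sb : 'I_k -> 'M[R]_(m, n))
  (L : 'M[R]_(m, n)) : Prop :=
  exists c : 'I_k -> R, L = \sum_(i < k) c i *: Sb i.

(* representation matrix S = [S_1 ... S_k] in R^{m x nk} *)
Definition repmx {R : realType} {m n k : nat} (Sb : 'I_k -> 'M[R]_(m, n))
  : 'M[R]_(m, k * n) :=
  \matrix_(i < m, j < k * n) Sb (mxtens_unindex j).1 i (mxtens_unindex j).2.

Definition Upsilon {R : realType} {m n k : nat} (S : 'M[R]_(m, k * n))
  (Rm : 'M[R]_n) : Prop :=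
  exists Lam : 'M[R]_k, symmx Lam /\
    S *m ((1%:M : 'M[R]_k) *t Rm) = S *m (Lam *t (1%:M : 'M[R]_n)).

Definition datamx {R : realType} {n m T : nat}
  (Xm : 'M[R]_(n, T)) (Um : 'M[R]_(m, T)) (Xp : 'M[R]_(n, T))
  : 'M[R]_(n + n + m, n + T) :=
  col_mx (col_mx (row_mx 1%:M Xp) (row_mx 0 (- Xm))) (row_mx 0 (- Um)).

Definition Psimx {R : realType} {n m T : nat}
  (Xm : 'M[R]_(n, T)) (Um : 'M[R]_(m, T)) (Xp : 'M[R]_(n, T))
  (Phi : 'M[R]_(n + T)) : 'M[R]_(n + n + m) :=
  datamx Xm Um Xp *m Phi *m (datamx Xm Um Xp)^T.

Definition SigmaD {R : realType} {n m T : nat}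
  (Xm : 'M[R]_(n, T)) (Um : 'M[R]_(m, T)) (Xp : 'M[R]_(n, T))
  (Phi : 'M[R]_(n + T)) (A : 'M[R]_n) (B : 'M[R]_(n, m)) : Prop :=
  let IAB : 'M[R]_(n, n + n + m) := row_mx (row_mx 1%:M A) B in
  psdmx (IAB *m Psimx Xm Um Xp Phi *m IAB^T).

(* H2 norm of the closed loop x+ = (A+BK)x + E xi, y = (C+DK)x, whose transfer
   function G_K(z) = (C+DK)(zI - A - BK)^{-1} E = sum_{j>=1} (C+DK)(A+BK)^{j-1} E z^{-j}.
   ||G_K||_{H2}^2 = sum_{j>=0} Tr( M_j^T M_j ), M_j = (C+DK)(A+BK)^j E
   (extended-real series of nonnegative terms; +oo if G_K is not in H2). *)
Definition H2norm_sq {R : realType} {n m q z : nat}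
  (A : 'M[R]_n) (B : 'M[R]_(n, m)) (C : 'M[R]_(q, n)) (D : 'M[R]_(q, m))
  (E : 'M[R]_(n, z)) (K : 'M[R]_(m, n)) : \bar R :=
  (\sum_(0 <= j <oo)
     (\tr (((C + D *m K) *m (A + B *m K) ^+ j *m E)^T
            *m ((C + D *m K) *m (A + B *m K) ^+ j *m E)))%:E)%E.

Definition H2_subopt {R : realType} {n m q z : nat}
  (A : 'M[R]_n) (B : 'M[R]_(n, m)) (C : 'M[R]_(q, n)) (D : 'M[R]_(q, m))
  (E : 'M[R]_(n, z)) (K : 'M[R]_(m, n)) (gamma : R) : Prop :=
  0 <= gamma /\ (H2norm_sq A B C D E K <= (gamma ^+ 2)%:E)%E.

Definition sdp_feasible {R : realType} {n m q z T k : nat}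
  (Xm : 'M[R]_(n, T)) (Um : 'M[R]_(m, T)) (Xp : 'M[R]_(n, T))
  (Phi : 'M[R]_(n + T)) (C : 'M[R]_(q, n)) (D : 'M[R]_(q, m))
  (E : 'M[R]_(n, z)) (Sb : 'I_k -> 'M[R]_(m, n))
  (P : 'M[R]_n) (Q : 'M[R]_q) (Rm : 'M[R]_n) (L : 'M[R]_(m, n))
  (alpha beta gamma : R) : Prop :=
  let Psi := Psimx Xm Um Xp Phi in
  let M11 : 'M[R]_(n + n + m) :=
    block_mx (block_mx (P - E *m E^T - beta%:M) 0 0 0) 0 0 0 in
  let M12 : 'M[R]_(n + n + m, n) := col_mx (col_mx 0 Rm) L in
  let Big : 'M[R]_(n + n + m + n) :=
    block_mx M11 M12 M12^T (Rm + Rm^T - P) in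
  let N := C *m Rm + D *m L in
  [/\ symmx P, symmx Q, Upsilon (repmx Sb) Rm & spanmx Sb L] /\
  [/\ psdmx (Big - alpha *: block_mx Psi 0 0 (0 : 'M[R]_n)),
      psdmx (block_mx Q N N^T (Rm + Rm^T - P)),
      \tr Q <= gamma ^+ 2 &
      [/\ 0 <= alpha, 0 < beta & 0 <= gamma]].

From HB Require Import structures.
From mathcomp Require Import all_boot all_order all_algebra.
From mathcomp Require Import mxtens.
From mathcomp Require Import all_classical all_reals all_analysis.
From mathcomp Require Import lra.
Import Order.TTheory GRing.Theory Num.Theory.
Local Open Scope ring_scope.

(* The S-procedure combines the first LMI with the quadratic matrix inequality
   defining Sigma_D into the closed-loop LMI
     [P - E E^T - beta I, (A + B K) R; *, R + R^T - P] >= 0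
   for every (A, B) in Sigma_D.  The true system lies in Sigma_D, so the
   diagonal blocks give P >= beta I > 0 and R + R^T >= P, hence R is
   invertible, and membership R in Upsilon(S) makes X |-> X R an automorphism
   of the subspace, so K = L R^-1 stays in it.  Since R + R^T - P is dominated
   by R^T P^-1 R, the closed-loop LMI yields the Stein inequality
   (A + B K) P (A + B K)^T + E E^T <= P and the second LMI yields
   (C + D K) P (C + D K)^T <= Q; thus the finite-horizon Gramians stay below P
   and every partial sum of the H2 series is at most tr Q <= gamma^2. *)

Section QuadraticForm.
Context {R : realFieldType}.

Definition qform {p} (x : 'cV[R]_p) (M : 'M[R]_p) : R := (x^T *m M *m x) 0 0.

Definition lemx {p} (M N : 'M[R]_p) : Prop := forall x, qform x M <= qform x N.

Lemma bilin_trmx {p r} (x : 'cV[R]_p) (y : 'cV[R]_r) (M : 'M[R]_(p, r)) :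
  (x^T *m M *m y) 0 0 = (y^T *m M^T *m x) 0 0.
Proof.
have -> : y^T *m M^T *m x = (x^T *m M *m y)^T by rewrite !trmx_mul trmxK mulmxA.
by rewrite [RHS]mxE.
Qed.

Lemma qformD {p} (x : 'cV[R]_p) M N : qform x (M + N) = qform x M + qform x N.
Proof. by rewrite /qform mulmxDr mulmxDl mxE. Qed.

Lemma qformN {p} (x : 'cV[R]_p) M : qform x (- M) = - qform x M.
Proof. by rewrite /qform mulmxN mulNmx mxE. Qed.

Lemma qformB {p} (x : 'cV[R]_p) M N : qform x (M - N) = qform x M - qform x N.
Proof. by rewrite qformD qformN. Qed.

Lemma qformZ {p} (x : 'cV[R]_p) a M : qform x (a *: M) = a * qform x M.
Proof. by rewrite /qform -scalemxAr -scalemxAl mxE. Qed.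

Lemma qform_tr {p} (x : 'cV[R]_p) M : qform x M^T = qform x M.
Proof. by rewrite /qform -bilin_trmx. Qed.

Lemma qform_mul {p r} (x : 'cV[R]_p) (G : 'M[R]_(p, r)) M :
  qform x (G *m M *m G^T) = qform (G^T *m x) M.
Proof. by rewrite /qform trmx_mul trmxK !mulmxA. Qed.

Lemma qform1_ge0 {p} (x : 'cV[R]_p) : 0 <= qform x 1%:M.
Proof.
rewrite /qform mulmx1 mxE; apply: sumr_ge0 => i _.
by rewrite mxE -expr2 sqr_ge0.
Qed.

Lemma qform1_eq0 {p} (x : 'cV[R]_p) : qform x 1%:M = 0 -> x = 0.
Proof.
rewrite /qform mulmx1 mxE => /eqP; rewrite psumr_eq0 => [/allP x0|i _]; last first.
  by rewrite mxE -expr2 sqr_ge0.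
apply/matrixP => i j; rewrite (ord1 j) !mxE.
by have := x0 i (mem_index_enum i); rewrite mxE -expr2 sqrf_eq0 => /eqP ->.
Qed.

Lemma qform_scalar {p} (x : 'cV[R]_p) a : qform x a%:M = a * qform x 1%:M.
Proof. by rewrite -[a%:M]scalemx1 qformZ. Qed.

Lemma qform_gram_ge0 {p r} (x : 'cV[R]_p) (G : 'M[R]_(p, r)) :
  0 <= qform x (G *m G^T).
Proof. by rewrite -[G in G *m _]mulmx1 qform_mul qform1_ge0. Qed.

Lemma qform_block {p r} (x : 'cV[R]_p) (y : 'cV[R]_r) a b c d :
  qform (col_mx x y) (block_mx a b c d) =
  qform x a + (x^T *m b *m y) 0 0 + ((y^T *m c *m x) 0 0 + qform y d).
Proof.
by rewrite /qform tr_col_mx mul_row_block mul_row_col !mulmxDl addrACA !mxE.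
Qed.

Lemma qform_block_ge0_ul {p r} {a : 'M[R]_p} {b c} {d : 'M[R]_r} :
  (forall v, 0 <= qform v (block_mx a b c d)) -> forall x : 'cV[R]_p, 0 <= qform x a.
Proof.
move=> abcd x; have := abcd (col_mx x 0).
by rewrite qform_block /qform trmx0 !mulmx0 !mul0mx !mxE !addr0.
Qed.

Lemma qform_block_ge0_dr {p r} {a : 'M[R]_p} {b c} {d : 'M[R]_r} :
  (forall v, 0 <= qform v (block_mx a b c d)) -> forall y : 'cV[R]_r, 0 <= qform y d.
Proof.
move=> abcd y; have := abcd (col_mx 0 y).
by rewrite qform_block /qform trmx0 !mulmx0 !mul0mx !mxE !add0r.
Qed.

Lemma qform_block_ul {p r} (x : 'cV[R]_p) (y : 'cV[R]_r) a :
  qform (col_mx x y) (block_mx a 0 0 (0 : 'M[R]_r)) = qform x a.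
Proof. by rewrite qform_block /qform !mulmx0 !mul0mx !mxE !addr0. Qed.

Lemma qform_block_congr {p p' r} (G : 'M[R]_(p, p')) (x : 'cV[R]_p) (y : 'cV[R]_r)
    a b c d :
  qform (col_mx (G^T *m x) y) (block_mx a b c d) =
  qform (col_mx x y) (block_mx (G *m a *m G^T) (G *m b) (c *m G^T) d).
Proof. by rewrite !qform_block qform_mul trmx_mul trmxK !mulmxA. Qed.

Lemma lemx_trans {p} {M N S : 'M[R]_p} : lemx M N -> lemx N S -> lemx M S.
Proof. by move=> MN NS x; apply: le_trans (MN x) (NS x). Qed.

Lemma lemxD2r {p} (M N S : 'M[R]_p) : lemx M N -> lemx (M + S) (N + S).
Proof. by move=> MN x; rewrite !qformD lerD2r. Qed.

Lemma lemx_mul {p r} (G : 'M[R]_(p, r)) {M N : 'M[R]_r} :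
  lemx M N -> lemx (G *m M *m G^T) (G *m N *m G^T).
Proof. by move=> MN x; rewrite !qform_mul. Qed.

Lemma mxtrace_trmx_mul_ge0 {p r} (M : 'M[R]_(p, r)) : 0 <= \tr (M^T *m M).
Proof.
apply: sumr_ge0 => i _; rewrite mxE; apply: sumr_ge0 => k _.
by rewrite mxE -expr2 sqr_ge0.
Qed.

Lemma lemx_trace {p} (M N : 'M[R]_p) : lemx M N -> \tr M <= \tr N.
Proof.
move=> MN; apply: ler_sum => i _.
by have := MN (delta_mx i 0); rewrite /qform trmx_delta -!mulmxA -!colE -!rowE !mxE.
Qed.

Lemma qform_addv {p} (u v : 'cV[R]_p) M :
  qform (u + v) M =
  qform u M + (u^T *m M *m v) 0 0 + (v^T *m M *m u) 0 0 + qform v M.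
Proof. by rewrite /qform [(u + v)^T]linearD /= !mulmxDl !mulmxDr !mxE addrA. Qed.

(* With the test vector [y := - Rm^-1 P G^T x] the cross terms of the block
   collapse to [- (u + y)^T P (u + y)] where [u := G^T x]. *)
Lemma lemx_of_slack_block {p n} {Q : 'M[R]_p} {G : 'M[R]_(p, n)} {P Rm : 'M[R]_n} :
  P^T = P -> (forall v, 0 <= qform v P) -> Rm \in unitmx ->
  (forall v, 0 <= qform v (block_mx Q (G *m Rm) (G *m Rm)^T (Rm + Rm^T - P))) ->
  lemx (G *m P *m G^T) Q.
Proof.
move=> sP P_ge0 Ru LMI x; rewrite qform_mul.
set u := G^T *m x; set y := - (invmx Rm *m (P *m u)).
have Ry : Rm *m y = - (P *m u) by rewrite mulmxN mulmxA mulmxV // mul1mx.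
have uT : u^T = x^T *m G by rewrite trmx_mul trmxK.
have cross : (x^T *m (G *m Rm) *m y) 0 0 = - qform u P.
  by rewrite mulmxA -mulmxA Ry mulmxN mxE -uT mulmxA.
have yRy : qform y Rm = - (y^T *m P *m u) 0 0.
  by rewrite /qform -mulmxA Ry mulmxN mxE mulmxA.
have := LMI (col_mx x y).
rewrite qform_block [(y^T *m _ *m x) 0 0]bilin_trmx trmxK cross.
rewrite qformB qformD qform_tr yRy.
have := P_ge0 (u + y); rewrite qform_addv [(u^T *m P *m y) 0 0]bilin_trmx sP.
lra.
Qed.

Lemma unitmx_sym_dominant {n} {Rm P : 'M[R]_n} :
  (forall v, 0 <= qform v (Rm + Rm^T - P)) -> (forall v, v != 0 -> 0 < qform v P) ->
  Rm \in unitmx.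
Proof.
move=> RP P_gt0; rewrite -unitmx_tr unitmxE unitfE.
apply/negP => /det0P [w w0 wR].
have Rw : Rm *m w^T = 0 by rewrite -[Rm]trmxK -trmx_mul wR trmx0.
have Rw0 : qform w^T Rm = 0 by rewrite /qform -mulmxA Rw mulmx0 mxE.
have := RP w^T; rewrite qformB qformD qform_tr Rw0.
by have := P_gt0 w^T; rewrite trmx_eq0 w0 => /(_ isT); lra.
Qed.

Lemma qform_gt0_of_scalar_lemx {n} {P : 'M[R]_n} {beta : R} :
  0 < beta -> lemx beta%:M P -> forall v, v != 0 -> 0 < qform v P.
Proof.
move=> b0 bP v v0; apply: lt_le_trans (bP v); rewrite qform_scalar mulr_gt0 //.
by rewrite lt_def qform1_ge0 andbT; apply: contra v0 => /eqP/qform1_eq0 ->.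
Qed.

Lemma gramian_lemx {n z} {A P : 'M[R]_n} {E : 'M[R]_(n, z)} :
  (forall v, 0 <= qform v P) -> lemx (A *m P *m A^T + E *m E^T) P ->
  forall N, lemx (\sum_(j < N) A ^+ j *m E *m (A ^+ j *m E)^T) P.
Proof.
move=> P_ge0 stein N.
pose S N := \sum_(j < N) A ^+ j *m E *m (A ^+ j *m E)^T.
suff inv : lemx (A ^+ N *m P *m (A ^+ N)^T + S N) P.
  by move=> x; apply: le_trans (inv x); rewrite qformD qform_mul lerDr.
elim: N => [|N IH].
  by rewrite /S big_ord0 addr0 expr0 -idmxE mul1mx trmx1 mulmx1.
apply: lemx_trans IH.
have -> : A ^+ N.+1 *m P *m (A ^+ N.+1)^T + S N.+1
        = A ^+ N *m (A *m P *m A^T + E *m E^T) *m (A ^+ N)^T + S N.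
  rewrite /S big_ord_recr /= exprSr -mulmxE !trmx_mul !mulmxA mulmxDr mulmxDl.
  by rewrite !mulmxA [RHS]addrAC addrA.
exact/lemxD2r/lemx_mul.
Qed.

Lemma lemx_scalar_of_lmi {n z r} {P : 'M[R]_n} {E : 'M[R]_(n, z)} {beta : R} {N N'}
    {W : 'M[R]_r} :
  (forall v, 0 <= qform v (block_mx (P - E *m E^T - beta%:M) N N' W)) ->
  lemx beta%:M P.
Proof.
move=> LMI x; have := qform_block_ge0_ul LMI x; rewrite !qformB.
by have := qform_gram_ge0 x E; lra.
Qed.

Lemma stein_of_lmi {n z} {Acl P Rm : 'M[R]_n} {E : 'M[R]_(n, z)} {beta : R} :
  0 <= beta -> P^T = P -> (forall v, 0 <= qform v P) -> Rm \in unitmx ->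
  (forall v, 0 <= qform v (block_mx (P - E *m E^T - beta%:M)
                             (Acl *m Rm) (Acl *m Rm)^T (Rm + Rm^T - P))) ->
  lemx (Acl *m P *m Acl^T + E *m E^T) P.
Proof.
move=> b0 sP P_ge0 Ru LMI x; have := lemx_of_slack_block sP P_ge0 Ru LMI x.
rewrite !(qformD, qformN) qform_scalar.
by have := mulr_ge0 b0 (qform1_ge0 x); lra.
Qed.

End QuadraticForm.

Section H2Bound.
Context {R : realType}.

Lemma H2_series_le_trace {n q z} {A P : 'M[R]_n} {C : 'M[R]_(q, n)}
    {E : 'M[R]_(n, z)} {Q : 'M[R]_q} :
  (forall v, 0 <= qform v P) -> lemx (A *m P *m A^T + E *m E^T) P ->
  lemx (C *m P *m C^T) Q ->
  (\sum_(0 <= j <oo) (\tr ((C *m A ^+ j *m E)^T *m (C *m A ^+ j *m E)))%:E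
     <= (\tr Q)%:E)%E.
Proof.
move=> P_ge0 stein CPC; apply: lime_le.
  by apply: is_cvg_nneseries => j _ _; rewrite lee_fin mxtrace_trmx_mul_ge0.
apply: nearW => N /=; rewrite sumEFin lee_fin big_mkord.
have -> : \sum_(j < N) \tr ((C *m A ^+ j *m E)^T *m (C *m A ^+ j *m E)) =
          \tr (C *m (\sum_(j < N) A ^+ j *m E *m (A ^+ j *m E)^T) *m C^T).
  rewrite mulmx_sumr mulmx_suml raddf_sum; apply: eq_bigr => j _.
  by rewrite mxtrace_mulC !trmx_mul !mulmxA.
exact/lemx_trace/(lemx_trans (lemx_mul C (gramian_lemx P_ge0 stein N))).
Qed.

Lemma H2_subopt_of_gramian {n m q z} {A : 'M[R]_n} {B : 'M[R]_(n, m)}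
    {C : 'M[R]_(q, n)} {D : 'M[R]_(q, m)} {E : 'M[R]_(n, z)} {K : 'M[R]_(m, n)}
    {P : 'M[R]_n} {Q : 'M[R]_q} {gamma : R} :
  0 <= gamma -> (forall v, 0 <= qform v P) ->
  lemx ((A + B *m K) *m P *m (A + B *m K)^T + E *m E^T) P ->
  lemx ((C + D *m K) *m P *m (C + D *m K)^T) Q -> \tr Q <= gamma ^+ 2 ->
  H2_subopt A B C D E K gamma.
Proof.
move=> g0 P_ge0 stein CPC trQ; split => //; rewrite /H2norm_sq.
by apply: le_trans (H2_series_le_trace P_ge0 stein CPC) _; rewrite lee_fin.
Qed.

End H2Bound.

Section SigmaD.
Context {R : realType}.

Lemma SigmaD_generating_system {n m T} {Xm : 'M[R]_(n, T)} {Um : 'M[R]_(m, T)}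
    {Xp : 'M[R]_(n, T)} {Astar : 'M[R]_n} {Bstar : 'M[R]_(n, m)} {Wm : 'M[R]_(n, T)}
    {Phi : 'M[R]_(n + T)} :
  Xp = Astar *m Xm + Bstar *m Um + Wm ->
  psdmx ((col_mx (1%:M : 'M[R]_n) Wm^T)^T *m Phi *m col_mx (1%:M : 'M[R]_n) Wm^T) ->
  SigmaD Xm Um Xp Phi Astar Bstar.
Proof.
move=> hX hW; rewrite /SigmaD /Psimx.
set IAB := row_mx (row_mx 1%:M Astar) Bstar.
have noise : IAB *m datamx Xm Um Xp = (col_mx (1%:M : 'M[R]_n) Wm^T)^T.
  rewrite /IAB /datamx tr_col_mx trmx1 trmxK !mul_row_col !mul_mx_row mul1mx.
  rewrite !mulmx0 !add_row_mx !addr0 hX mul1mx !mulmxN; congr row_mx.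
  by rewrite -addrA -opprD [_ + Wm]addrC addrK.
have -> : IAB *m (datamx Xm Um Xp *m Phi *m (datamx Xm Um Xp)^T) *m IAB^T
        = (IAB *m datamx Xm Um Xp) *m Phi *m (IAB *m datamx Xm Um Xp)^T.
  by rewrite trmx_mul !mulmxA.
by rewrite noise trmxK.
Qed.

Lemma SigmaD_closed_loop_lmi {n m z} (Psi : 'M[R]_(n + n + m)) (A P Rm : 'M[R]_n)
    (B : 'M[R]_(n, m)) (L : 'M[R]_(m, n)) (E : 'M[R]_(n, z)) (alpha beta : R) :
  0 <= alpha ->
  (forall x, 0 <= qform x
     (row_mx (row_mx 1%:M A) B *m Psi *m (row_mx (row_mx 1%:M A) B)^T)) ->
  (forall v, 0 <= qform v
     (block_mx (block_mx (block_mx (P - E *m E^T - beta%:M) 0 0 0) 0 0 0)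
        (col_mx (col_mx 0 Rm) L) (col_mx (col_mx 0 Rm) L)^T (Rm + Rm^T - P)
      - alpha *: block_mx Psi 0 0 (0 : 'M[R]_n))) ->
  forall v, 0 <= qform v (block_mx (P - E *m E^T - beta%:M) (A *m Rm + B *m L)
                            (A *m Rm + B *m L)^T (Rm + Rm^T - P)).
Proof.
move=> a0 Sig LMI v; rewrite -[v]vsubmxK.
(* S-procedure: evaluate the big LMI at [col_mx ([I A B]^T x) y]. *)
set x := usubmx v; set y := dsubmx v; set IAB := row_mx (row_mx 1%:M A) B.
have := LMI (col_mx (IAB^T *m x) y).
rewrite qformB qformZ qform_block_ul -qform_mul qform_block_congr.
have -> : IAB *m block_mx (block_mx (P - E *m E^T - beta%:M) 0 0 0) 0 0 0 *m IAB^T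
          = P - E *m E^T - beta%:M.
  rewrite /IAB !mul_row_block !mulmx0 !addr0 mul1mx !tr_row_mx trmx1.
  by rewrite !mul_row_col !mul0mx !addr0 mulmx1.
have IAB_M12 : IAB *m col_mx (col_mx 0 Rm) L = A *m Rm + B *m L.
  by rewrite !mul_row_col mulmx0 add0r.
rewrite IAB_M12 -trmx_mul IAB_M12.
by have := mulr_ge0 a0 (Sig x); lra.
Qed.

End SigmaD.

Lemma sum_mxtens_index {V : nmodType} {p r} (F : 'I_(p * r) -> V) :
  \sum_l F l = \sum_(i < p) \sum_(j < r) F (mxtens_index (i, j)).
Proof.
rewrite pair_big /= (reindex (@mxtens_index p r)) /=; last first.
  by exists (@mxtens_unindex p r) => ? _; rewrite (mxtens_indexK, mxtens_unindexK).
by apply: eq_bigr => -[].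
Qed.

Section UpsilonSpan.
Variables (R : realType) (m n k : nat) (Sb : 'I_k -> 'M[R]_(m, n)).

Lemma repmx_mxtens_index a j c : repmx Sb a (mxtens_index (j, c)) = Sb j a c.
Proof. by rewrite mxE mxtens_indexK. Qed.

Lemma Upsilon_basis_mul {Rm : 'M[R]_n} {Lam : 'M[R]_k} :
  repmx Sb *m (1%:M *t Rm) = repmx Sb *m (Lam *t 1%:M) ->
  forall j, Sb j *m Rm = \sum_i Lam i j *: Sb i.
Proof.
move=> UL j; apply/matrixP => a c.
have lhs : (repmx Sb *m (1%:M *t Rm)) a (mxtens_index (j, c)) = (Sb j *m Rm) a c.
  rewrite !mxE sum_mxtens_index.
  under eq_bigr do under eq_bigr do rewrite repmx_mxtens_index tensmxE.
  rewrite (bigD1 j) //= [X in _ + X]big1 ?addr0 => [|i ij].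
    by apply: eq_bigr => b _; rewrite mxE eqxx mulr1n mul1r.
  by apply: big1 => b _; rewrite mxE (negbTE ij) mulr0n mul0r mulr0.
have rhs : (repmx Sb *m (Lam *t 1%:M)) a (mxtens_index (j, c))
           = (\sum_i Lam i j *: Sb i) a c.
  rewrite !mxE sum_mxtens_index summxE.
  under eq_bigr do under eq_bigr do rewrite repmx_mxtens_index tensmxE.
  apply: eq_bigr => i _; rewrite (bigD1 c) //= [X in _ + X]big1 ?addr0 => [|b bc].
    by rewrite !mxE eqxx mulr1n mulr1 mulrC.
  by rewrite mxE (negbTE bc) mulr0n !mulr0.
by rewrite -lhs -rhs UL.
Qed.

Lemma spanmx_mul_invmx Rm L :
  linindep Sb -> Upsilon (repmx Sb) Rm -> Rm \in unitmx -> spanmx Sb L ->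
  spanmx Sb (L *m invmx Rm).
Proof.
move=> li [Lam [_ UL]] Ru [d ->].
pose comb (c : 'rV[R]_k) := \sum_j c 0 j *: Sb j.
(* In these coordinates right multiplication by [Rm] is [c |-> c *m Lam^T]. *)
have combR c : comb c *m Rm = comb (c *m Lam^T).
  rewrite /comb mulmx_suml.
  under eq_bigr do rewrite -scalemxAl (Upsilon_basis_mul UL) scaler_sumr.
  rewrite exchange_big /=; apply: eq_bigr => i _.
  by rewrite mxE scaler_suml; apply: eq_bigr => j _; rewrite scalerA mxE.
have comb0 : comb 0 = 0 by apply: big1 => j _; rewrite mxE scale0r.
have LamU : Lam^T \in unitmx.
  rewrite unitmxE unitfE; apply/negP => /det0P [w w0 wL].
  have /(congr1 (mulmx^~ (invmx Rm))) : comb w *m Rm = 0 by rewrite combR wL comb0.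
  rewrite mulmxK // mul0mx => /li w_eq0.
  by move/eqP: w0; apply; apply/matrixP => a b; rewrite ord1 w_eq0 mxE.
exists (fun j => (\row_i d i *m invmx Lam^T) 0 j).
have -> : \sum_i d i *: Sb i = comb (\row_i d i *m invmx Lam^T) *m Rm.
  by rewrite combR mulmxKV //; apply: eq_bigr => i _; rewrite mxE.
by rewrite mulmxK.
Qed.

End UpsilonSpan.

Theorem theorem1 (R : realType) (n m q z T k : nat)
  (Xm : 'M[R]_(n, T)) (Um : 'M[R]_(m, T)) (Xp : 'M[R]_(n, T))
  (Astar : 'M[R]_n) (Bstar : 'M[R]_(n, m)) (Wm : 'M[R]_(n, T))
  (Phi : 'M[R]_(n + T))
  (C : 'M[R]_(q, n)) (D : 'M[R]_(q, m)) (E : 'M[R]_(n, z))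
  (Sb : 'I_k -> 'M[R]_(m, n))
  (P : 'M[R]_n) (Q : 'M[R]_q) (Rm : 'M[R]_n) (L : 'M[R]_(m, n))
  (alpha beta gstar : R) :
  Xp = Astar *m Xm + Bstar *m Um + Wm ->
  symmx Phi ->
  psdmx (ulsubmx Phi) ->
  ndmx (drsubmx Phi) ->
  psdmx ((col_mx (1%:M : 'M[R]_n) Wm^T)^T *m Phi *m col_mx (1%:M : 'M[R]_n) Wm^T) ->
  linindep Sb ->
  sdp_feasible Xm Um Xp Phi C D E Sb P Q Rm L alpha beta gstar ->
  (forall (P' : 'M[R]_n) (Q' : 'M[R]_q) (R' : 'M[R]_n) (L' : 'M[R]_(m, n))
          (alpha' beta' gamma' : R),
      sdp_feasible Xm Um Xp Phi C D E Sb P' Q' R' L' alpha' beta' gamma' ->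
      gstar <= gamma') ->
  spanmx Sb (L *m invmx Rm) /\
  (forall (A : 'M[R]_n) (B : 'M[R]_(n, m)),
      SigmaD Xm Um Xp Phi A B ->
      H2_subopt A B C D E (L *m invmx Rm) gstar).
Proof.
move=> hX _ _ _ hW Sb_indep [[sP _ R_Ups L_span] [[_ LMI] [_ CLMI] trQ [a0 b0 g0]]] _.
have lmi A B : SigmaD Xm Um Xp Phi A B -> forall v, 0 <= qform v
    (block_mx (P - E *m E^T - beta%:M) (A *m Rm + B *m L) (A *m Rm + B *m L)^T
       (Rm + Rm^T - P)).
  by move=> [_ Sig]; exact: SigmaD_closed_loop_lmi a0 Sig LMI.
have lmi_star := lmi _ _ (SigmaD_generating_system hX hW).
have betaP := lemx_scalar_of_lmi lmi_star.
have P_ge0 v : 0 <= qform v P.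
  apply: le_trans (betaP v).
  by rewrite qform_scalar (mulr_ge0 (ltW b0)) ?qform1_ge0.
have Ru : Rm \in unitmx.
  exact: unitmx_sym_dominant (qform_block_ge0_dr lmi_star)
                             (qform_gt0_of_scalar_lemx b0 betaP).
split; first exact: spanmx_mul_invmx.
have feedback p (G : 'M[R]_(p, n)) (F : 'M[R]_(p, m)) :
    G *m Rm + F *m L = (G + F *m (L *m invmx Rm)) *m Rm.
  by rewrite mulmxDl -mulmxA mulmxKV.
move=> A B /lmi; rewrite feedback => cl_lmi.
apply: (H2_subopt_of_gramian g0 P_ge0 _ _ trQ).
  exact: stein_of_lmi (ltW b0) sP P_ge0 Ru cl_lmi.
apply: (lemx_of_slack_block sP P_ge0 Ru) => v.
by rewrite -feedback; exact: CLMI.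
Qed.
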